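(* Let $k$ be a natural number and let $p$ be the smallest prime with $p > 2^{k-1}+1$. For natural numbers $q,\ell$ let $G_{q,\ell}$ denote the graph consisting of two vertices $s,t$ joined by $q$ internally disjoint paths, each of length $\ell$. Then $G_{q,2^{k-1}}$ is not $\mathbb{Z}_2^k$-connected for any odd $q$, and $G_{q,2^{k-1}}$ is $\mathbb{Z}_p$-connected whenever $q \geq p$.
   Context: Graphs are finite, may have multiple edges but no loops. $\mathbb{Z}_2^k$ denotes the direct product of $k$ copies of $\mathbb{Z}_2$. For an orientation $D$ of $G$ and a vertex $v$, $E^+(v)$ (resp. $E^-(v)$) is the set of edges directed out of (resp. into) $v$. For an Abelian group $\Gamma$, a graph $G$ is $\Gamma$-connected if for some (equivalently, any) orientation $D$ of $G$ and every function $\beta: V(G)\to\Gamma$ with $\sum_{v\in V(G)}\beta(v)=0$ there exists $f: E(G)\to\Gamma$ with $f(e)\neq 0$ for all edges $e$ and $\sum_{e\in E^+(v)} f(e)-\sum_{e\in E^-(v)} f(e)=\beta(v)$ for all $v\in V(G)$. *)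

From HB Require Import structures.
From mathcomp Require Import all_boot all_order all_algebra.
Set Implicit Arguments. Unset Strict Implicit. Unset Printing Implicit Defensive.
Import GRing.Theory.
Local Open Scope ring_scope.

(* A finite multigraph (no loops required by the users) is given by a finite
   vertex type V, a finite edge type E and, for each edge, its two ends
   [end1 e] and [end2 e]. *)

Definition tail_of (V E : Type) (end1 end2 : E -> V) (o : E -> bool) (e : E) : V :=
  if o e then end1 e else end2 e.
Definition head_of (V E : Type) (end1 end2 : E -> V) (o : E -> bool) (e : E) : V :=
  if o e then end2 e else end1 e.

Definition group_connected (Gamma : zmodType) (V E : finType)
    (end1 end2 : E -> V) : Prop :=
  exists o : E -> bool,
    forall beta : V -> Gamma, \sum_(v : V) beta v = 0 ->
    exists f : E -> Gamma,
      (forall e, f e != 0) /\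
      forall v : V,
        \sum_(e : E | tail_of end1 end2 o e == v) f e
        - \sum_(e : E | head_of end1 end2 o e == v) f e = beta v.

(* The graph G_{q,l}: vertices s, t (inl false, inl true) and internal
   vertices inr (i, j) = the (j+1)-th vertex of the i-th path (j < l-1).
   Edges (i, j), i < q, j < l: the j-th edge of path i, joining the
   j-th and (j+1)-th vertices of that path (0-th = s, l-th = t). *)
Definition theta_V (q l : nat) : finType := (bool + ('I_q * 'I_l.-1))%type.
Definition theta_E (q l : nat) : finType := ('I_q * 'I_l)%type.

Definition theta_pos (q l : nat) (i : 'I_q) (m : nat) : theta_V q l :=
  if m == 0%N then inl false
  else if m == l then inl true
  else match @insub nat (fun n => (n < l.-1)%N) 'I_l.-1 m.-1 with
       | Some j => inr (i, j)
       | None => inl false (* never reached for 0 < m < l *)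
       end.

Definition theta_end1 (q l : nat) (e : theta_E q l) : theta_V q l :=
  theta_pos l e.1 (nat_of_ord e.2).
Definition theta_end2 (q l : nat) (e : theta_E q l) : theta_V q l :=
  theta_pos l e.1 (nat_of_ord e.2).+1.

Definition Z2k (k : nat) : zmodType := {ffun 'I_k -> 'Z_2}.

From mathcomp Require Import all_boot all_order all_algebra zify.
Set Implicit Arguments. Unset Strict Implicit. Unset Printing Implicit Defensive.
Import GRing.Theory.
Local Open Scope ring_scope.

(* Orient every path from s to t.  A flow f meets a demand beta at the inner
   vertices of path i iff f (i, j) = x_i + c_i(j), where c_i(j) sums beta over
   the first j inner vertices of the path; the demand at s then reads
   sum_i x_i = beta s, and the demand at t follows since beta sums to 0.
   Over Z_p, x_i only has to avoid the l = 2^(k-1) values -c_i(j), which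
   leaves at least p - l >= 2 choices, and q >= p - 1 subsets of Z_p with at
   least two elements each have the whole of Z_p as their sumset (the sumset
   grows at each step until it is full, by primality of p).
   Over Z_2^k orientations do not matter.  Choose beta so that c(0), ...,
   c(l - 1) enumerate the hyperplane H of vectors with last coordinate 0.
   A nowhere-zero flow then has x_i outside H on every path, so every first
   edge carries a vector with last coordinate 1, and the demand 0 at s fails
   when q is odd. *)

Section Boundary.
Variables (V E : finType) (G : zmodType).

Definition boundary (tl hd : E -> V) (f : E -> G) (v : V) : G :=
  \sum_(e | tl e == v) f e - \sum_(e | hd e == v) f e.

Lemma sum_boundary tl hd f : \sum_v boundary tl hd f v = 0.
Proof.
have sum_fibres (g : E -> V) : \sum_v \sum_(e | g e == v) f e = \sum_e f e.
  rewrite (exchange_big_dep xpredT) //=; apply: eq_bigr => e _.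
  by rewrite (big_pred1 (g e)) // => v; rewrite /= eq_sym.
by rewrite sumrB !sum_fibres subrr.
Qed.

Lemma boundary_last tl hd f (beta : V -> G) v0 :
  \sum_v beta v = 0 -> (forall v, v != v0 -> boundary tl hd f v = beta v) ->
  boundary tl hd f v0 = beta v0.
Proof.
move=> beta_sum0 f_beta; have := sum_boundary tl hd f.
rewrite (bigD1 v0) //= (eq_bigr beta) => [|v /f_beta //].
move=> bd_sum0; apply: (@addIr _ (\sum_(v | v != v0) beta v)).
by rewrite bd_sum0 -[LHS]beta_sum0 (bigD1 v0).
Qed.

Lemma boundary_orient_exponent2 (end1 end2 : E -> V) o f v :
  (forall x : G, - x = x) ->
  boundary (tail_of end1 end2 o) (head_of end1 end2 o) f v = boundary end1 end2 f v.
Proof.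
move=> oppr_id; rewrite /boundary !oppr_id !(big_mkcond (fun e => _ == v)) -!big_split.
by apply: eq_bigr => e _; rewrite /tail_of /head_of; case: (o e); last exact: addrC.
Qed.

End Boundary.

Notation theta_boundary q l := (boundary (@theta_end1 q l) (@theta_end2 q l)).

Section ThetaGraph.
Variables (q n : nat).
Local Notation end1 := (@theta_end1 q n.+1).
Local Notation end2 := (@theta_end2 q n.+1).

Lemma theta_pos_inner (i : 'I_q) (m : 'I_n) : theta_pos n.+1 i m.+1 = inr (i, m).
Proof. by rewrite /theta_pos eqSS (ltn_eqF (ltn_ord m)) /= valK. Qed.

Lemma theta_end1_s e : (end1 e == inl false) = (e.2 == ord0).
Proof.
case: e => i j; rewrite /theta_end1 /=.
by case: (unliftP ord0 j) => [m ->|->]; rewrite ?lift0 ?theta_pos_inner.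
Qed.

Lemma theta_end2_s e : (end2 e == inl false) = false.
Proof.
case: e => i j; rewrite /theta_end2 /=.
case: (unliftP ord_max j) => [m ->|->]; rewrite ?lift_max ?theta_pos_inner //.
by rewrite /theta_pos /= eqxx.
Qed.

Lemma theta_end1_inner e i m : (end1 e == inr (i, m)) = (e == (i, lift ord0 m)).
Proof.
case: e => i' j; rewrite /theta_end1 /= xpair_eqE.
case: (unliftP ord0 j) => [m' ->|->]; last by rewrite (negbTE (neq_lift _ _)) andbF.
by rewrite lift0 theta_pos_inner (inj_eq (@lift_inj _ ord0)).
Qed.

Lemma theta_end2_inner e i m : (end2 e == inr (i, m)) = (e == (i, lift ord_max m)).
Proof.
case: e => i' j; rewrite /theta_end2 /= xpair_eqE.
case: (unliftP ord_max j) => [m' ->|->]; last first.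
  by rewrite /theta_pos /= eqxx eq_sym (negbTE (neq_lift _ _)) andbF.
by rewrite lift_max theta_pos_inner (inj_eq (@lift_inj _ ord_max)).
Qed.

Variables (G : zmodType) (f : theta_E q n.+1 -> G).

Lemma theta_boundary_s : theta_boundary q n.+1 f (inl false) = \sum_i f (i, ord0).
Proof.
rewrite /boundary [X in _ - X]big_pred0 => [|e]; last exact: theta_end2_s.
rewrite subr0 [RHS](eq_bigr (fun i => \sum_(j | j == ord0) f (i, j))) => [|i _].
  by rewrite pair_big_dep; apply: eq_big => [e|[i j] _] //; rewrite theta_end1_s.
by rewrite big_pred1_eq.
Qed.

Lemma theta_boundary_inner i m :
  theta_boundary q n.+1 f (inr (i, m)) = f (i, lift ord0 m) - f (i, lift ord_max m).
Proof.
rewrite /boundary (big_pred1 (i, lift ord0 m)) => [|e]; last exact: theta_end1_inner.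
by rewrite (big_pred1 (i, lift ord_max m)) => // e; exact: theta_end2_inner.
Qed.

Lemma theta_path_potential (c : nat -> G) i :
  (forall m : 'I_n, theta_boundary q n.+1 f (inr (i, m)) = c m.+1 - c m) ->
  forall j : 'I_n.+1, f (i, j) - c j = f (i, ord0) - c 0%N.
Proof.
move=> f_inner [j]; elim: j => [|j IH] lt_j_n.
  by congr (f (i, _) - _); apply: val_inj.
have lt_jn : (j < n)%N by [].
have := f_inner (Ordinal lt_jn); rewrite theta_boundary_inner -(IH (ltnW lt_j_n)).
have -> : lift ord0 (Ordinal lt_jn) = Ordinal lt_j_n by apply: val_inj.
have -> : lift ord_max (Ordinal lt_jn) = Ordinal (ltnW lt_j_n).
  by apply: val_inj; exact: lift_max.
move=> /eqP; rewrite subr_eq => /eqP ->.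
by rewrite /= addrAC (addrAC (c _)) subrr add0r addrC.
Qed.

End ThetaGraph.

Lemma card_avoid_opposites (T : finZmodType) (J : finType) (g : J -> T) :
  (#|T| <= #|[set y : T | [forall j, (y + g j != 0)%R]]| + #|J|)%N.
Proof.
set S := [set y | _]; have <- := cardsC S; rewrite leq_add2l.
have sub : ~: S \subset [set - g j | j in J].
  apply/subsetP => y; rewrite !inE negb_forall => /existsP[j].
  by rewrite negbK addr_eq0 => /eqP ->; exact: imset_f.
by rewrite (leq_trans (subset_leq_card sub)) // leq_imset_card.
Qed.

Section ZpSumsets.
Variables (p : nat) (p_pr : prime p).

Lemma card_Zp_prime : #|'Z_p| = p.
Proof. by rewrite card_ord Zp_cast // prime_gt1. Qed.

Lemma Zp_shift_closed_setT (T : {set 'Z_p}) (d : 'Z_p) :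
  d != 0 -> T != set0 -> (forall t, t \in T -> t + d \in T) -> T = setT.
Proof.
move=> d_neq0 /set0Pn[t0 t0T] T_shift.
have T_mul m : t0 + d *+ m \in T.
  by elim: m => [|m IH]; rewrite ?mulr0n ?addr0 // mulrSr addrA T_shift.
have d_unit : d \is a GRing.unit.
  rewrite -[d]natr_Zp unitZpE ?prime_gt1 // prime_coprime // gtnNdvd //.
    by rewrite lt0n; apply: contraNneq d_neq0 => d0; apply/eqP/val_inj.
  by rewrite -[X in (_ < X)%N](Zp_cast (prime_gt1 p_pr)).
apply/setP => y; rewrite inE.
have -> : y = t0 + d *+ val ((y - t0) / d).
  by rewrite -mulr_natl natr_Zp divrK // addrC subrK.
exact: T_mul.
Qed.

Lemma card_addset (S A : {set 'Z_p}) : S != set0 -> (1 < #|A|)%N ->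
  (minn p #|S|.+1 <= #|[set (x + a)%R | x in S, a in A]|)%N.
Proof.
move=> S_neq0 /card_gt1P[a [b [aA bA a_neq_b]]].
set SA := [set _ | _ in _, _ in _].
have shift_sub c : c \in A -> [set x + c | x in S] \subset SA.
  by move=> cA; apply/subsetP => _ /imsetP[x xS ->]; exact: imset2_f.
have card_shift c : #|[set x + c | x in S]| = #|S| by rewrite card_imset //; exact: addIr.
have le_S_SA : (#|S| <= #|SA|)%N by rewrite -(card_shift a) subset_leq_card // shift_sub.
have [lt_S_SA | le_SA_S] := ltnP #|S| #|SA|; first by rewrite geq_min lt_S_SA orbT.
have shiftE c : c \in A -> [set x + c | x in S] = SA.
  by move=> cA; apply/eqP; rewrite eqEcard shift_sub // card_shift.
have S_full : S = setT.
  apply: (@Zp_shift_closed_setT _ (b - a)) S_neq0 _; first by rewrite subr_eq0 eq_sym.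
  move=> t tS; have : t + b \in [set x + a | x in S].
    by rewrite shiftE // -(shiftE b) //; apply: imset_f.
  by case/imsetP => t' t'S; rewrite addrA => ->; rewrite addrK.
by rewrite geq_min -{1}card_Zp_prime -cardsT -S_full le_S_SA.
Qed.

Section Choices.
Variables (I : finType) (A : I -> {set 'Z_p}).
Hypothesis A_gt1 : forall i, (1 < #|A i|)%N.

Definition choices (J : {set I}) : {set {ffun I -> 'Z_p}} :=
  [set x : {ffun I -> 'Z_p} | [forall i in J, x i \in A i]].

Definition partial_sums (J : {set I}) : {set 'Z_p} :=
  [set \sum_(i in J) x i | x : {ffun I -> 'Z_p} in choices J].

Lemma partial_sums_setU1 (J : {set I}) j : j \notin J ->
  [set s + a | s in partial_sums J, a in A j] \subset partial_sums (j |: J).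
Proof.
move=> jNJ; apply/subsetP => _ /imset2P[_ a /imsetP[x xJ ->] aAj ->].
pose x' := [ffun i => if i == j then a else x i].
apply/imsetP; exists x'.
  rewrite inE; apply/forall_inP => i; rewrite in_setU1 ffunE.
  by case: eqP => [-> //| _ /= iJ]; move: xJ; rewrite inE => /forall_inP; exact.
rewrite big_setU1 //= ffunE eqxx addrC; congr (_ + _); apply: eq_bigr => i iJ.
by rewrite ffunE ifN //; apply: contraNneq jNJ => <-.
Qed.

Lemma card_partial_sums (J : {set I}) : (minn p #|J|.+1 <= #|partial_sums J|)%N.
Proof.
move: {2}#|J| (erefl #|J|) => n; elim: n J => [|n IH] J cardJ.
  rewrite cardJ; apply: leq_trans (geq_minr _ _) _.
  rewrite card_gt0; apply/set0Pn; exists 0.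
  apply/imsetP; exists [ffun => 0]; last by rewrite big1 // => i; rewrite ffunE.
  by rewrite inE (cards0_eq cardJ); apply/forall_inP => i; rewrite in_set0.
have [j jJ] : exists j, j \in J by apply/card_gt0P; rewrite cardJ.
have card_Jj : #|J :\ j| = n by move: (cardsD1 j J); rewrite jJ cardJ => -[].
have := IH _ card_Jj; set S := partial_sums _ => le_S.
have S_neq0 : S != set0 by rewrite -card_gt0 (leq_trans _ le_S) // leq_min prime_gt0.
rewrite cardJ -(setD1K jJ).
apply: (leq_trans _ (subset_leq_card (partial_sums_setU1 _))); last by rewrite !inE eqxx.
by apply: (leq_trans _ (card_addset S_neq0 (A_gt1 j))); move: le_S; lia.
Qed.

Lemma Zp_sum_choices : (p <= #|I|.+1)%N ->
  forall y : 'Z_p, exists2 x : {ffun I -> 'Z_p}, (forall i, x i \in A i) & \sum_i x i = y.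
Proof.
move=> le_p_I y; have : partial_sums setT = setT.
  apply/eqP; rewrite eqEcard subsetT cardsT card_Zp_prime.
  by have := card_partial_sums setT; rewrite cardsT (minn_idPl le_p_I).
move/setP/(_ y); rewrite !inE => /imsetP[x]; rewrite inE => /forall_inP x_A ->.
by exists x => [i|]; [exact: x_A (in_setT i) | apply: eq_bigl => i; rewrite in_setT].
Qed.

End Choices.
End ZpSumsets.

Lemma theta_Zp_connected p q n : prime p -> (n.+2 < p)%N -> (p <= q)%N ->
  group_connected 'Z_p (@theta_end1 q n.+1) (@theta_end2 q n.+1).
Proof.
move=> p_pr lt_n2_p le_pq; exists (fun _ => true) => beta beta_sum0.
pose c (i : 'I_q) (j : nat) := \sum_(m < n | (m < j)%N) beta (inr (i, m)).
have cS i (m : 'I_n) : c i m.+1 = beta (inr (i, m)) + c i m.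
  rewrite /c (bigD1 m) //=; congr (_ + _); apply: eq_bigl => m'.
  by rewrite ltnS [RHS]ltn_neqAle andbC.
pose A i : {set 'Z_p} := [set y | [forall j : 'I_n.+1, y + c i j != 0]].
have A_gt1 i : (1 < #|A i|)%N.
  have := card_avoid_opposites (fun j : 'I_n.+1 => c i j).
  by rewrite card_Zp_prime // card_ord -/(A i); move: #|A i| lt_n2_p; lia.
have le_p_q1 : (p <= #|'I_q|.+1)%N by rewrite card_ord leqW.
have [x x_A x_sum] := Zp_sum_choices p_pr A_gt1 le_p_q1 (beta (inl false)).
pose f (e : theta_E q n.+1) := x e.1 + c e.1 e.2.
exists f; split.
  by move=> [i j]; have := x_A i; rewrite inE => /forallP; apply.
have f_beta v : v != inl true -> theta_boundary q n.+1 f v = beta v.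
  case: v => [[]|[i m]] // _.
    rewrite theta_boundary_s -x_sum; apply: eq_bigr => i _.
    by rewrite /f /c big_pred0 ?addr0.
  by rewrite theta_boundary_inner /f lift0 lift_max cS addrCA addrK.
move=> v; have [->|] := eqVneq v (inl true); last exact: f_beta.
exact: boundary_last beta_sum0 f_beta.
Qed.

Lemma Z2k_oppr k (x : Z2k k) : - x = x.
Proof. by apply/ffunP => i; rewrite ffunE; apply: oppr_pchar2. Qed.

Lemma Z2_neq0 (a : 'Z_2) : a != 0 -> a = 1.
Proof. by case: a => -[|[|]] //= ? _; apply: val_inj. Qed.

Lemma hyperplane_enumeration k : exists2 c : nat -> Z2k k.+1,
  (forall j, c j ord_max = 0) &
  (forall X : Z2k k.+1, X ord_max = 0 -> exists2 j, (j < 2 ^ k)%N & c j = X).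
Proof.
pose Y := {ffun 'I_k -> 'Z_2}.
pose ext (y : Y) : Z2k k.+1 := [ffun i => if unlift ord_max i is Some j then y j else 0].
exists (fun j => ext (nth [ffun => 0] (enum Y) j)) => [j|X X_last].
  by rewrite ffunE unlift_none.
pose y : Y := [ffun j => X (lift ord_max j)].
have size_Y : size (enum Y) = (2 ^ k)%N by rewrite -cardE card_ffun !card_ord.
exists (index y (enum Y)); first by rewrite -size_Y index_mem mem_enum.
rewrite nth_index ?mem_enum //; apply/ffunP => i; rewrite ffunE.
by case: unliftP => [j ->|->]; rewrite ?ffunE.
Qed.

Lemma first_edge_last_coord k q n (c : nat -> Z2k k.+1)
    (f : theta_E q n.+1 -> Z2k k.+1) (i : 'I_q) :
  (forall X : Z2k k.+1, X ord_max = 0 -> exists2 j, (j < n.+1)%N & c j = X) ->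
  c 0%N ord_max = 0 ->
  (forall e, f e != 0) ->
  (forall m : 'I_n, theta_boundary q n.+1 f (inr (i, m)) = c m.+1 - c m) ->
  f (i, ord0) ord_max = 1.
Proof.
move=> c_onto c0_last f_neq0 f_inner; apply: Z2_neq0; apply/eqP => f0_last.
have [j lt_j_n cjE] : exists2 j, (j < n.+1)%N & c j = c 0%N - f (i, ord0).
  by apply: c_onto; rewrite !ffunE c0_last f0_last subrr.
have := theta_path_potential f_inner (Ordinal lt_j_n).
rewrite /= cjE opprB addrC -[RHS]addr0 => /addrI fj0.
by have := f_neq0 (i, Ordinal lt_j_n); rewrite fj0 eqxx.
Qed.

Lemma theta_not_Z2k_connected k q : odd q ->
  ~ group_connected (Z2k k.+1) (@theta_end1 q (2 ^ k)) (@theta_end2 q (2 ^ k)).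
Proof.
move=> q_odd; have [c c_last] := hyperplane_enumeration k.
rewrite -(prednK (expn_gt0 2 k)); move: (2 ^ k).-1 => n c_onto [o conn].
pose b (v : theta_V q n.+1) := if v is inr (_, m) then c m.+1 - c m else 0.
pose beta v := if v == inl true then - \sum_(u | u != inl true) b u else b v.
have beta_sum0 : \sum_v beta v = 0.
  rewrite (bigD1 (inl true)) //= {1}/beta eqxx [X in _ + X](eq_bigr b) ?addNr // => v.
  by rewrite /beta => /negbTE ->.
have [f [f_neq0 f_beta]] := conn beta beta_sum0.
have f_bd v : theta_boundary q n.+1 f v = beta v.
  by rewrite -(boundary_orient_exponent2 _ _ o f v (@Z2k_oppr _)); exact: f_beta.
have f_first i : f (i, ord0) ord_max = 1.
  by apply: first_edge_last_coord c_onto (c_last 0%N) f_neq0 _ => m; rewrite f_bd.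
have := f_bd (inl false); rewrite theta_boundary_s.
move/(congr1 (fun X : Z2k k.+1 => X ord_max)).
rewrite sum_ffunE (eq_bigr _ (fun i _ => f_first i)) sumr_const card_ord ffunE.
by move/(congr1 val); rewrite /= val_Zp_nat // modn2 q_odd.
Qed.

Theorem theorem3p2 (k p : nat) :
  (1 <= k)%N ->
  prime p -> (2 ^ k.-1 + 1 < p)%N ->
  (forall r : nat, prime r -> (2 ^ k.-1 + 1 < r)%N -> (p <= r)%N) ->
  (forall q : nat, odd q ->
     ~ group_connected (Z2k k)
         (@theta_end1 q (2 ^ k.-1)) (@theta_end2 q (2 ^ k.-1))) /\
  (forall q : nat, (p <= q)%N ->
     group_connected 'Z_p
         (@theta_end1 q (2 ^ k.-1)) (@theta_end2 q (2 ^ k.-1))).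
Proof.
move=> k_gt0 p_pr lt_p _; split=> q.
  by case: k k_gt0 {lt_p} => // k _; exact: theta_not_Z2k_connected.
by move: lt_p; rewrite -(prednK (expn_gt0 2 k.-1)) addn1; exact: theta_Zp_connected.
Qed.
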